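(* Let $\Gamma\subseteq A$ be $\Bbbk$-algebras, $\sim$ an equivalence relation on $\mathrm{cfs}(\Gamma)$, with $\Gamma$ a strong Harish-Chandra block subalgebra of $A$ with respect to $\sim$. For $B,C,D\in\mathrm{cfs}(\Gamma)/{\sim}$, the composition rule described in the context yields a well-defined (independent of all choices) $(\Gamma,\Gamma)$-bimodule map $\mathcal A(C,D)\otimes_\Gamma\mathcal A(B,C)\to\mathcal A(B,D)$; it is associative, satisfies $\gamma.\alpha=(\gamma)\circ\alpha$ and $\alpha.\gamma=\alpha\circ(\gamma)$ for $\gamma\in\Gamma$, and makes $\mathcal A$ a category with identity morphisms $(1)\in\mathcal A(B,B)$.
   Context: $\mathrm{cfs}(\Gamma)$: maximal two-sided ideals $\mathfrak m$ with $\dim\Gamma/\mathfrak m<\infty$. For a class $B$, $\mathcal W(B)=\{\mathfrak m_1\cdots\mathfrak m_k:k\ge0,\mathfrak m_i\in B\}$. For a left $\Gamma$-module $V$, $V(B)=\{v:\mathfrak mv=0$ for some $\mathfrak m\in\mathcal W(B)\}$, and for a right module $V(B)=\{v:v\mathfrak m=0$ for some $\mathfrak m\in\mathcal W(B)\}$; $V$ is a strong block module if $V=\bigoplus_BV(B)$ and each $V(B)$ is killed by some $\mathfrak m\in\mathcal W(B)$. $\Gamma$ is a strong Harish-Chandra block subalgebra of $A$ if for all $B$, $\mathfrak m\in\mathcal W(B)$, the left module $A/A\mathfrak m$ and right module $A/\mathfrak mA$ are strong block modules. $\mathcal A(B,C)=\varprojlim_{\mathfrak n\in\mathcal W(C),\mathfrak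 m\in\mathcal W(B)}A/(\mathfrak nA+A\mathfrak m)$; for $\alpha\in\mathcal A(B,C)$, $\alpha_{\mathfrak m,\mathfrak n}$ is its image in $A/(\mathfrak nA+A\mathfrak m)$, and $(a)$ is the image of $a\in A$. Composition: for $\mathfrak m\in\mathcal W(B)$, $\mathfrak l\in\mathcal W(D)$, choose $\mathfrak n\in\mathcal W(C)$ such that the natural maps give bimodule isomorphisms $A/(\mathfrak lA+A\mathfrak n)\cong(A/\mathfrak lA)(C)$ and $A/(\mathfrak nA+A\mathfrak m)\cong(A/A\mathfrak m)(C)$ (such $\mathfrak n$ exists); given $\alpha\in\mathcal A(B,C)$, $\beta\in\mathcal A(C,D)$ choose $a_0,b_0\in A$ with $\alpha_{\mathfrak m,\mathfrak n}=a_0+\mathfrak nA+A\mathfrak m$, $a_0+A\mathfrak m\in(A/A\mathfrak m)(C)$, $\beta_{\mathfrak n,\mathfrak l}=b_0+\mathfrak lA+A\mathfrak n$, $b_0+\mathfrak lA\in(A/\mathfrak lA)(C)$, and define $(\beta\circ\alpha)_{\mathfrak m,\mathfrak l}=b_0a_0+\mathfrak lA+A\mathfrak m$. *)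

(* Harish-Chandra block subalgebras: the category A of
   completed morphism spaces.  Subsets of A are Prop-valued predicates;
   equality of subsets is Leibniz equality (funext/propext are available). *)
From HB Require Import structures.
From mathcomp Require Import all_boot all_order all_algebra.
Set Implicit Arguments. Unset Strict Implicit. Unset Printing Implicit Defensive.
Import GRing.Theory.
Local Open Scope ring_scope.

Section HC.
Variables (k : fieldType) (A : algType k).
Local Notation pset := (A -> Prop).

Definition psubset (P Q : pset) := forall x, P x -> Q x.

Definition is_subalg (G : pset) :=
  [/\ G 1, (forall x y, G x -> G y -> G (x + y)), (forall x, G x -> G (- x)),
      (forall x y, G x -> G y -> G (x * y)) & (forall (c : k) x, G x -> G (c *: x))].

Definition is_ideal (G m : pset) :=
  psubset m G /\ m 0 /\ (forall x y, m x -> m y -> m (x + y)) /\ (forall x, m x -> m (- x)) /\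
      (forall g x, G g -> m x -> m (g * x)) /\ (forall g x, G g -> m x -> m (x * g)).

Definition is_max_ideal (G m : pset) :=
  [/\ is_ideal G m, m <> G &
      forall J, is_ideal G J -> psubset m J -> J = m \/ J = G].

(* dim_k Gamma/m < oo : finitely many elements of Gamma span Gamma modulo m *)
Definition fin_codim (G m : pset) :=
  exists (n : nat) (v : 'I_n -> A), (forall i, G (v i)) /\
    forall g, G g -> exists c : 'I_n -> k, m (g - \sum_(i < n) c i *: v i).

Definition cfs (G m : pset) := is_max_ideal G m /\ fin_codim G m.

Definition equiv_on_cfs (G : pset) (R : pset -> pset -> Prop) :=
  [/\ (forall m, cfs G m -> R m m),
      (forall m n, cfs G m -> cfs G n -> R m n -> R n m) &
      (forall m n p, cfs G m -> cfs G n -> cfs G p -> R m n -> R n p -> R m p)].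

Definition is_class (G : pset) (R : pset -> pset -> Prop) (B : pset -> Prop) :=
  exists m0, cfs G m0 /\ B = (fun m => cfs G m /\ R m m0).

Definition sum_prods (P Q : pset) : pset := fun z =>
  exists (r : nat) (x y : 'I_r -> A),
    (forall i, P (x i) /\ Q (y i)) /\ z = \sum_(i < r) x i * y i.

Definition ideal_prod (G : pset) (ms : seq pset) : pset := foldr sum_prods G ms.

Definition inW (G : pset) (B : pset -> Prop) (m : pset) :=
  exists ms : seq pset, foldr (fun m0 P => B m0 /\ P) True ms /\ m = ideal_prod G ms.

Definition lgen (m : pset) : pset := sum_prods (fun _ => True) m.
Definition rgen (m : pset) : pset := sum_prods m (fun _ => True).

Definition Qmod (m n : pset) : pset := fun z =>
  exists u v, rgen n u /\ lgen m v /\ z = u + v.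

(* For the quotient A/K with Gamma acting by act (act x a = x*a for a left
   module, a*x for a right module): preimage in A of V(B). *)
Definition Vblk (G : pset) (act : A -> A -> A) (K : pset) (B : pset -> Prop) : pset :=
  fun a => exists n, inW G B n /\ forall x, n x -> K (act x a).

(* A/K is a strong block module: A/K = (+)_B V(B) (internal direct sum over
   the classes B) and each V(B) is killed by some element of W(B). *)
Definition strong_block (G : pset) (R : pset -> pset -> Prop) (act : A -> A -> A) (K : pset) :=
  [/\ (forall a, exists (r : nat) (Bs : 'I_r -> pset -> Prop) (v : 'I_r -> A),
          (forall i, is_class G R (Bs i) /\ Vblk G act K (Bs i) (v i)) /\
          K (a - \sum_(i < r) v i)),
      (forall (r : nat) (Bs : 'I_r -> pset -> Prop) (v : 'I_r -> A), injective Bs ->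
          (forall i, is_class G R (Bs i) /\ Vblk G act K (Bs i) (v i)) ->
          K (\sum_(i < r) v i) -> forall i, K (v i)) &
      (forall B, is_class G R B -> exists n, inW G B n /\
          forall a, Vblk G act K B a -> forall x, n x -> K (act x a))].

Definition lact : A -> A -> A := fun x a => x * a.
Definition ract : A -> A -> A := fun x a => a * x.

Definition strong_HC (G : pset) (R : pset -> pset -> Prop) :=
  forall B, is_class G R B -> forall m, inW G B m ->
    strong_block G R lact (lgen m) /\ strong_block G R ract (rgen m).

(* Elements of A(B,C) = lim_{n in W(C), m in W(B)} A/(nA + Am), W ordered by
   inclusion: f m n is a representative of the component alpha_{m,n}. *)
Definition hcfam := pset -> pset -> A.

Definition in_lim (G : pset) (B C : pset -> Prop) (f : hcfam) :=
  forall m m' n n', inW G B m -> inW G B m' -> inW G C n -> inW G C n' ->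
    psubset m' m -> psubset n' n -> Qmod m n (f m' n' - f m n).

Definition lim_eq (G : pset) (B C : pset -> Prop) (f g : hcfam) :=
  forall m n, inW G B m -> inW G C n -> Qmod m n (f m n - g m n).

Definition fam_add (f g : hcfam) : hcfam := fun m n => f m n + g m n.
Definition fam_lmul (c : A) (f : hcfam) : hcfam := fun m n => c * f m n.
Definition fam_rmul (f : hcfam) (c : A) : hcfam := fun m n => f m n * c.
Definition fam_cst (a : A) : hcfam := fun _ _ => a.

(* the map (A/lA)(C) -> A/(lA + An) is bijective *)
Definition proj_bij_right (G : pset) (C : pset -> Prop) (l n : pset) :=
  (forall a, exists b, Vblk G ract (rgen l) C b /\ Qmod n l (a - b)) /\
  (forall b, Vblk G ract (rgen l) C b -> Qmod n l b -> rgen l b).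

(* the map (A/Am)(C) -> A/(nA + Am) is bijective *)
Definition proj_bij_left (G : pset) (C : pset -> Prop) (m n : pset) :=
  (forall a, exists b, Vblk G lact (lgen m) C b /\ Qmod m n (a - b)) /\
  (forall b, Vblk G lact (lgen m) C b -> Qmod m n b -> lgen m b).

(* an admissible choice (n, a0, b0) in the composition rule, for
   alpha = f in A(B,C), beta = g in A(C,D), m in W(B), l in W(D) *)
Definition admissible (G : pset) (C : pset -> Prop) (f g : hcfam)
    (m l n : pset) (a0 b0 : A) :=
  [/\ inW G C n, proj_bij_right G C l n, proj_bij_left G C m n,
      Qmod m n (f m n - a0) /\ Vblk G lact (lgen m) C a0 &
      Qmod n l (g n l - b0) /\ Vblk G ract (rgen l) C b0].

(* h = g o f according to the composition rule: admissible choices exist,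
   and for EVERY admissible choice h_{m,l} = b0 a0 + lA + Am *)
Definition comp_spec (G : pset) (B C D : pset -> Prop) (f g h : hcfam) :=
  forall m l, inW G B m -> inW G D l ->
    (exists n a0 b0, admissible G C f g m l n a0 b0) /\
    (forall n a0 b0, admissible G C f g m l n a0 b0 -> Qmod m l (h m l - b0 * a0)).

End HC.

(* For m in W(B) and l in W(D), the strong block decompositions of A/Am and
   A/lA show that for all sufficiently small n in W(C) the projections
   (A/Am)(C) -> A/(nA + Am) and (A/lA)(C) -> A/(lA + An) are bijective:
   components in a block other than C are absorbed into nA (resp. An) because
   ideals from different classes are comaximal.  A lift a in (A/Am)(C) is then
   killed by n into Am and a lift b in (A/lA)(C) into lA, so b a is well defined
   in A/(lA + Am) and does not depend on n.  Moreover one factor may stay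
   unlifted, (g o f)_{m,l} = g_{n,l} a, which reduces every law, associativity
   included, to ring identities modulo lA + Am. *)

From mathcomp Require Import all_boot all_algebra.
From Stdlib Require Import Classical ClassicalEpsilon FunctionalExtensionality PropExtensionality.
Set Implicit Arguments. Unset Strict Implicit. Unset Printing Implicit Defensive.
Import GRing.Theory.
Local Open Scope ring_scope.

Section SumProds.
Variables (k : fieldType) (A : algType k).
Local Notation pset := (A -> Prop).
Implicit Types (P Q m n l : pset) (a b c x y z : A).

Lemma psubsetxx P : psubset P P. Proof. by []. Qed.

Lemma sum_prods0 P Q : sum_prods P Q 0.
Proof.
exists 0%N, (fun _ => 0), (fun _ => 0); split; first by case.
by rewrite big_ord0.
Qed.

Lemma sum_prods_mul P Q x y : P x -> Q y -> sum_prods P Q (x * y).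
Proof.
move=> Px Qy; exists 1%N, (fun _ => x), (fun _ => y); split=> //.
by rewrite big_ord1.
Qed.

Lemma sum_prodsD P Q a b : sum_prods P Q a -> sum_prods P Q b -> sum_prods P Q (a + b).
Proof.
move=> [r1 [x1 [y1 [H1 ->]]]] [r2 [x2 [y2 [H2 ->]]]].
exists (r1 + r2)%N,
  (fun i => match split i with inl j => x1 j | inr j => x2 j end),
  (fun i => match split i with inl j => y1 j | inr j => y2 j end).
split; first by move=> i; case: (split i).
rewrite big_split_ord /=; congr (_ + _); apply: eq_bigr => i _.
  by rewrite (unsplitK (inl i)).
by rewrite (unsplitK (inr i)).
Qed.

Lemma sum_prods_ind P Q (S : pset) : S 0 -> (forall a b, S a -> S b -> S (a + b)) ->
  (forall x y, P x -> Q y -> S (x * y)) -> psubset (sum_prods P Q) S.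
Proof.
move=> S0 SD Sxy z [r [x [y [H ->]]]].
by apply: (big_ind S) => // i _; case: (H i); apply: Sxy.
Qed.

Lemma sum_prodsS P Q P' Q' : psubset P P' -> psubset Q Q' ->
  psubset (sum_prods P Q) (sum_prods P' Q').
Proof.
move=> sP sQ; apply: sum_prods_ind; [exact: sum_prods0 | exact: sum_prodsD |].
by move=> x y /sP Px /sQ Qy; apply: sum_prods_mul.
Qed.

Lemma lgen0 m : lgen m 0. Proof. exact: sum_prods0. Qed.
Lemma rgen0 m : rgen m 0. Proof. exact: sum_prods0. Qed.
Lemma lgenD m a b : lgen m a -> lgen m b -> lgen m (a + b). Proof. exact: sum_prodsD. Qed.
Lemma rgenD m a b : rgen m a -> rgen m b -> rgen m (a + b). Proof. exact: sum_prodsD. Qed.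
Lemma lgen_mul m a x : m x -> lgen m (a * x). Proof. exact: sum_prods_mul. Qed.
Lemma rgen_mul m a x : m x -> rgen m (x * a). Proof. by move=> mx; apply: sum_prods_mul. Qed.
Lemma lgenS m m' : psubset m m' -> psubset (lgen m) (lgen m').
Proof. by move=> s; apply: sum_prodsS. Qed.
Lemma rgenS m m' : psubset m m' -> psubset (rgen m) (rgen m').
Proof. by move=> s; apply: sum_prodsS. Qed.

Lemma lgenMl m c a : lgen m a -> lgen m (c * a).
Proof.
move: a; apply: sum_prods_ind; first by rewrite mulr0; apply: lgen0.
  by move=> a b Ha Hb; rewrite mulrDr; apply: lgenD.
by move=> x y _ my; rewrite mulrA; apply: lgen_mul.
Qed.

Lemma rgenMr m c a : rgen m a -> rgen m (a * c).
Proof.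
move: a; apply: sum_prods_ind; first by rewrite mul0r; apply: rgen0.
  by move=> a b Ha Hb; rewrite mulrDl; apply: rgenD.
by move=> x y mx _; rewrite -mulrA; apply: rgen_mul.
Qed.

Lemma lgenN m a : lgen m a -> lgen m (- a).
Proof. by move=> H; rewrite -mulN1r; apply: lgenMl. Qed.
Lemma rgenN m a : rgen m a -> rgen m (- a).
Proof. by move=> H; rewrite -mulrN1; apply: rgenMr. Qed.

Lemma Qmod_lgen m n z : lgen m z -> Qmod m n z.
Proof. by move=> H; exists 0, z; rewrite add0r; split; first exact: rgen0. Qed.
Lemma Qmod_rgen m n z : rgen n z -> Qmod m n z.
Proof. by move=> H; exists z, 0; rewrite addr0; split=> //; split; first exact: lgen0. Qed.
Lemma Qmod0 m n : Qmod m n 0. Proof. exact/Qmod_lgen/lgen0. Qed.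

Lemma QmodD m n x y : Qmod m n x -> Qmod m n y -> Qmod m n (x + y).
Proof.
move=> [u1 [v1 [? [? ->]]]] [u2 [v2 [? [? ->]]]]; exists (u1 + u2), (v1 + v2).
by split; [apply: rgenD | split; [apply: lgenD | rewrite addrACA]].
Qed.

Lemma QmodN m n x : Qmod m n x -> Qmod m n (- x).
Proof.
move=> [u [v [? [? ->]]]]; exists (- u), (- v).
by split; [apply: rgenN | split; [apply: lgenN | rewrite opprD]].
Qed.

Lemma Qmod_sym m n x y : Qmod m n (x - y) -> Qmod m n (y - x).
Proof. by move/QmodN; rewrite opprB. Qed.

Lemma Qmod_trans m n y x z : Qmod m n (x - y) -> Qmod m n (y - z) -> Qmod m n (x - z).
Proof. by move=> H1 H2; rewrite -(subrKA y); apply: QmodD. Qed.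

Lemma QmodS m n m' n' z : psubset m m' -> psubset n n' -> Qmod m n z -> Qmod m' n' z.
Proof.
move=> sm sn [u [v [Hu [Hv ->]]]]; exists u, v.
by split; [exact: rgenS sn _ Hu | split; first exact: lgenS sm _ Hv].
Qed.

Lemma Qmod_mull m n l b x : (forall y, n y -> rgen l (b * y)) -> Qmod m n x ->
  Qmod m l (b * x).
Proof.
move=> nb [u [v [Hu [Hv ->]]]]; rewrite mulrDr; apply: QmodD; last exact/Qmod_lgen/lgenMl.
apply: Qmod_rgen; move: u Hu; apply: sum_prods_ind.
- by rewrite mulr0; apply: rgen0.
- by move=> ? ? ? ?; rewrite mulrDr; apply: rgenD.
- by move=> y a ny _; rewrite mulrA; apply/rgenMr/nb.
Qed.

Lemma Qmod_mulr m n l a x : (forall y, n y -> lgen m (y * a)) -> Qmod n l x ->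
  Qmod m l (x * a).
Proof.
move=> na [u [v [Hu [Hv ->]]]]; rewrite mulrDl; apply: QmodD; first exact/Qmod_rgen/rgenMr.
apply: Qmod_lgen; move: v Hv; apply: sum_prods_ind.
- by rewrite mul0r; apply: lgen0.
- by move=> ? ? ? ?; rewrite mulrDl; apply: lgenD.
- by move=> c y _ ny; rewrite -mulrA; apply/lgenMl/na.
Qed.

End SumProds.

Arguments psubsetxx {k A} P.

Section Ideals.
Variables (k : fieldType) (A : algType k).
Local Notation pset := (A -> Prop).
Implicit Types (I J m n : pset) (a c g x y z : A).
Variable G : pset.
Hypothesis HG : is_subalg G.

Lemma subalg1 : G 1. Proof. by case: HG. Qed.
Lemma subalgD x y : G x -> G y -> G (x + y). Proof. by case: HG => _ H *; apply: H. Qed.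
Lemma subalgN x : G x -> G (- x). Proof. by case: HG => _ _ H *; apply: H. Qed.
Lemma subalgM x y : G x -> G y -> G (x * y). Proof. by case: HG => _ _ _ H *; apply: H. Qed.
Lemma subalg0 : G 0.
Proof. by rewrite -(subrr (1 : A)); apply/subalgD/subalgN/subalg1; apply: subalg1. Qed.

Section Ideal.
Variable I : pset.
Hypothesis HI : is_ideal G I.

Lemma ideal_sub x : I x -> G x. Proof. by case: HI => H _; apply: H. Qed.
Lemma ideal0 : I 0. Proof. by case: HI => _ []. Qed.
Lemma idealD x y : I x -> I y -> I (x + y). Proof. by case: HI => _ [_ [H _]]; apply: H. Qed.
Lemma idealN x : I x -> I (- x). Proof. by case: HI => _ [_ [_ [H _]]]; apply: H. Qed.
Lemma idealMl g x : G g -> I x -> I (g * x).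
Proof. by case: HI => _ [_ [_ [_ [H _]]]]; apply: H. Qed.
Lemma idealMr g x : G g -> I x -> I (x * g).
Proof. by case: HI => _ [_ [_ [_ [_ H]]]]; apply: H. Qed.

Lemma rgenMl c a : G c -> rgen I a -> rgen I (c * a).
Proof.
move=> Gc; move: a; apply: sum_prods_ind; first by rewrite mulr0; apply: rgen0.
  by move=> a b Ha Hb; rewrite mulrDr; apply: rgenD.
by move=> x y Ix _; rewrite mulrA; apply/rgen_mul/idealMl.
Qed.

Lemma lgenMr c a : G c -> lgen I a -> lgen I (a * c).
Proof.
move=> Gc; move: a; apply: sum_prods_ind; first by rewrite mul0r; apply: lgen0.
  by move=> a b Ha Hb; rewrite mulrDl; apply: lgenD.
by move=> x y _ Iy; rewrite -mulrA; apply/lgen_mul/idealMr.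
Qed.

End Ideal.

Lemma ideal_subalg : is_ideal G G.
Proof.
do !split=> //; [exact: subalg0 | exact: subalgD | exact: subalgN |..];
  by move=> *; apply: subalgM.
Qed.

Lemma sum_prods_ideal I J : is_ideal G I -> is_ideal G J -> is_ideal G (sum_prods I J).
Proof.
move=> HI HJ; have GIJ x y : I x -> J y -> G (x * y).
  by move=> Ix Jy; apply: subalgM; [apply: (ideal_sub HI) | apply: (ideal_sub HJ)].
split; first by apply: sum_prods_ind; [exact: subalg0 | exact: subalgD | exact: GIJ].
split; first exact: sum_prods0.
split; first by move=> *; apply: sum_prodsD.
split.
  apply: sum_prods_ind; first by rewrite oppr0; apply: sum_prods0.
    by move=> a b Ha Hb; rewrite opprD; apply: sum_prodsD.
  by move=> x y Ix Jy; rewrite -mulNr; apply/sum_prods_mul/Jy/(idealN HI).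
split=> g z Gg; move: z.
  apply: sum_prods_ind; first by rewrite mulr0; apply: sum_prods0.
    by move=> a b Ha Hb; rewrite mulrDr; apply: sum_prodsD.
  by move=> x y Ix Jy; rewrite mulrA; apply/sum_prods_mul/Jy/(idealMl HI).
apply: sum_prods_ind; first by rewrite mul0r; apply: sum_prods0.
  by move=> a b Ha Hb; rewrite mulrDl; apply: sum_prodsD.
by move=> x y Ix Jy; rewrite -mulrA; apply/sum_prods_mul/(idealMr HJ).
Qed.

Lemma Qmod_mulGl m n c x : is_ideal G n -> G c -> Qmod m n x -> Qmod m n (c * x).
Proof.
move=> In Gc [u [v [Hu [Hv ->]]]]; rewrite mulrDr.
by apply: QmodD; [apply/Qmod_rgen/(rgenMl In) | apply/Qmod_lgen/lgenMl].
Qed.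

Lemma Qmod_mulGr m n c x : is_ideal G m -> G c -> Qmod m n x -> Qmod m n (x * c).
Proof.
move=> Im Gc [u [v [Hu [Hv ->]]]]; rewrite mulrDl.
by apply: QmodD; [apply/Qmod_rgen/rgenMr | apply/Qmod_lgen/(lgenMr Im)].
Qed.

Definition all_in (C : pset -> Prop) (ms : seq pset) := foldr (fun m0 P => C m0 /\ P) True ms.

Section IdealProducts.
Variable C : pset -> Prop.
Hypothesis C_ideal : forall m, C m -> is_ideal G m.

Lemma ideal_prod_ideal ms : all_in C ms -> is_ideal G (ideal_prod G ms).
Proof.
elim: ms => [|m ms IH] /= => [_ | [Cm /IH]]; first exact: ideal_subalg.
exact/sum_prods_ideal/C_ideal.
Qed.

Lemma foldr_sum_prods_sub ms J : all_in C ms -> is_ideal G J ->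
  psubset (foldr (@sum_prods _ A) J ms) J.
Proof.
move=> + HJ; elim: ms => [|m ms IH] /= => [_ // | [Cm /IH sJ]].
apply: sum_prods_ind; [exact: ideal0 | exact: idealD |].
by move=> x y mx /sJ Jy; apply: (idealMl HJ) => //; apply: ideal_sub (C_ideal Cm) _ mx.
Qed.

Lemma ideal_prod_cat_sub ms1 ms2 : all_in C ms1 -> all_in C ms2 ->
  psubset (ideal_prod G (ms1 ++ ms2)) (ideal_prod G ms1) /\
  psubset (ideal_prod G (ms1 ++ ms2)) (ideal_prod G ms2).
Proof.
move=> H1 H2; have I2 := ideal_prod_ideal H2.
rewrite /ideal_prod foldr_cat; split; last exact: foldr_sum_prods_sub.
elim: (ms1) => [|m ms IH] //=; first exact: ideal_sub I2.
by apply: sum_prodsS.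
Qed.

End IdealProducts.

Definition comax (P Q : pset) := exists x y, [/\ P x, Q y & x + y = 1].

Lemma comax_sym P Q : comax P Q -> comax Q P.
Proof. by move=> [x [y [Px Qy E]]]; exists y, x; split => //; rewrite addrC. Qed.

Lemma comax_subalg I : is_ideal G I -> comax I G.
Proof. by move=> HI; exists 0, 1; rewrite add0r; split=> //; [apply: ideal0 | apply: subalg1]. Qed.

(* [1 = (y1 + x1) (x2 + y2)] with [yi \in J], [xi \in Ii]. *)
Lemma comax_sum_prods J I1 I2 : is_ideal G J -> psubset I1 G -> psubset I2 G ->
  comax J I1 -> comax J I2 -> comax J (sum_prods I1 I2).
Proof.
move=> HJ H1 H2 [y1 [x1 [Jy1 Ix1 E1]]] [y2 [x2 [Jy2 Ix2 E2]]].
exists (y1 * (x2 + y2) + x1 * y2), (x1 * x2); split; last 1 first.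
- have -> : (1 : A) = (y1 + x1) * (x2 + y2) by rewrite (addrC x2) E1 E2 mulr1.
  by rewrite mulrDl [x1 * (_ + _)]mulrDr -addrA (addrC (x1 * y2)).
- apply: (idealD HJ); first by apply: idealMr; rewrite // addrC E2; apply: subalg1.
  by apply: (idealMl HJ) => //; apply: H1.
- exact: sum_prods_mul.
Qed.

Lemma comax_ideal_prod J (C : pset -> Prop) ms : is_ideal G J ->
  (forall m, C m -> is_ideal G m /\ comax J m) -> all_in C ms -> comax J (ideal_prod G ms).
Proof.
move=> HJ HC; elim: ms => [_ | m ms IH [Cm Hms]] /=; first exact: comax_subalg.
have [Im Jm] := HC m Cm; have Ims := ideal_prod_ideal (fun m Cm => (HC m Cm).1) Hms.
by apply: comax_sum_prods (ideal_sub Im) (ideal_sub Ims) _ (IH Hms).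
Qed.

End Ideals.

Section Classes.
Variables (k : fieldType) (A : algType k).
Local Notation pset := (A -> Prop).
Implicit Types (B C : pset -> Prop) (m n : pset).
Variable G : pset.
Hypothesis HG : is_subalg G.
Variable R : pset -> pset -> Prop.
Hypothesis HR : equiv_on_cfs G R.

Lemma class_cfs C m : is_class G R C -> C m -> cfs G m.
Proof. by move=> [m0 [_ ->]] []. Qed.

Lemma class_ideal C : is_class G R C -> forall m, C m -> is_ideal G m.
Proof. by move=> HC m Cm; case: (class_cfs HC Cm) => [[]]. Qed.

Lemma inW_ideal C n : is_class G R C -> inW G C n -> is_ideal G n.
Proof. by move=> HC [ms [Hms ->]]; exact: (ideal_prod_ideal HG (class_ideal HC) Hms). Qed.

Lemma inW_subalg C : inW G C G.
Proof. by exists [::]. Qed.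

Lemma inW_meet C n1 n2 : is_class G R C -> inW G C n1 -> inW G C n2 ->
  exists n, [/\ inW G C n, psubset n n1 & psubset n n2].
Proof.
move=> HC [ms1 [H1 ->]] [ms2 [H2 ->]].
have [s1 s2] := ideal_prod_cat_sub HG (class_ideal HC) H1 H2.
exists (ideal_prod G (ms1 ++ ms2)); split=> //.
exists (ms1 ++ ms2); split=> //.
by elim: (ms1) H1 => //= m ms IH [Cm /IH].
Qed.

Lemma class_eq B C m : is_class G R B -> is_class G R C -> B m -> C m -> B = C.
Proof.
case: HR => _ Rsym Rtrans [b0 [Hb0 ->]] [c0 [Hc0 ->]] [Hm Rmb] [_ Rmc].
apply: functional_extensionality => x; apply: propositional_extensionality.
split=> -[Hx Rx]; split => //.
- by apply: (Rtrans _ _ _ Hx Hm Hc0) => //; apply: (Rtrans _ _ _ Hx Hb0 Hm) => //; apply: Rsym.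
- by apply: (Rtrans _ _ _ Hx Hm Hb0) => //; apply: (Rtrans _ _ _ Hx Hc0 Hm) => //; apply: Rsym.
Qed.

(* [m1 + m2] is an ideal strictly containing the maximal ideal [m1], hence all of [G]. *)
Lemma comax_classes B C m1 m2 : is_class G R B -> is_class G R C -> B <> C ->
  B m1 -> C m2 -> comax m1 m2.
Proof.
move=> HB HC BC Bm1 Cm2.
have [[I1 ne1 max1] _] := class_cfs HB Bm1.
have [[I2 _ max2] _] := class_cfs HC Cm2.
have ne : m1 <> m2 by move=> E; apply: BC; apply: (class_eq HB HC Bm1); rewrite E.
pose S z := exists x y, [/\ m1 x, m2 y & z = x + y].
have IS : is_ideal G S.
  split; first by move=> z [x [y [/(ideal_sub I1) ? /(ideal_sub I2) ? ->]]]; apply: subalgD.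
  split; first by exists 0, 0; rewrite addr0; split; [exact: (ideal0 I1) | exact: (ideal0 I2) |].
  split.
    move=> z1 z2 [x1 [y1 [? ? ->]]] [x2 [y2 [? ? ->]]]; exists (x1 + x2), (y1 + y2).
    by split; [apply: (idealD I1) | apply: (idealD I2) | rewrite addrACA].
  split; first by move=> z [x [y [? ? ->]]]; exists (- x), (- y);
    split; [apply: (idealN I1) | apply: (idealN I2) | rewrite opprD].
  split=> g z Gg [x [y [? ? ->]]].
    exists (g * x), (g * y).
    by split; [apply: (idealMl I1) | apply: (idealMl I2) | rewrite mulrDr].
  exists (x * g), (y * g).
  by split; [apply: (idealMr I1) | apply: (idealMr I2) | rewrite mulrDl].
have m1S : psubset m1 S by move=> x Hx; exists x, 0; rewrite addr0; split=> //; exact: (ideal0 I2).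
case: (max1 S IS m1S) => ES; last first.
  have [x [y [? ? E]]] : S 1 by rewrite ES; apply: subalg1.
  by exists x, y.
have m2m1 : psubset m2 m1.
  by move=> y Hy; rewrite -ES; exists 0, y; rewrite add0r; split=> //; exact: (ideal0 I1).
by case: (max2 m1 I1 m2m1).
Qed.

Lemma comax_inW B C n1 n2 : is_class G R B -> is_class G R C -> B <> C ->
  inW G B n1 -> inW G C n2 -> comax n1 n2.
Proof.
move=> HB HC BC [ms1 [H1 ->]] [ms2 [H2 ->]].
have I2 := ideal_prod_ideal HG (class_ideal HC) H2.
apply/comax_sym/(comax_ideal_prod HG I2 _ H1) => m Bm.
split; first exact: (class_ideal HB Bm).
apply/comax_sym/(comax_ideal_prod HG (class_ideal HB Bm) _ H2) => m' Cm'.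
by split; [exact: (class_ideal HC Cm') | exact: (comax_classes HB HC BC Bm Cm')].
Qed.

Definition eventuallyW C (P : pset -> Prop) :=
  exists n0, inW G C n0 /\ forall n, inW G C n -> psubset n n0 -> P n.

Lemma eventuallyW_and C P Q : is_class G R C ->
  eventuallyW C P -> eventuallyW C Q -> eventuallyW C (fun n => P n /\ Q n).
Proof.
move=> HC [n1 [Hn1 P1]] [n2 [Hn2 Q2]]; have [n0 [Hn0 s1 s2]] := inW_meet HC Hn1 Hn2.
by exists n0; split=> // n Hn sn; split; [apply: P1 => // x /sn /s1 | apply: Q2 => // x /sn /s2].
Qed.

Lemma eventuallyW_sub C n0 : inW G C n0 -> eventuallyW C (fun n => psubset n n0).
Proof. by exists n0. Qed.

Lemma eventuallyW_ex C P : eventuallyW C P -> exists n, inW G C n /\ P n.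
Proof. by move=> [n0 [Hn0 P0]]; exists n0; split=> //; apply: P0. Qed.

End Classes.

Section BlockModule.
Variables (k : fieldType) (A : algType k).
Local Notation pset := (A -> Prop).
Implicit Types (B C : pset -> Prop) (n : pset) (a b g x y z : A).
Variable G : pset.
Hypothesis HG : is_subalg G.
Variable R : pset -> pset -> Prop.
Hypothesis HR : equiv_on_cfs G R.

(* Covers both [lact] (with [mul] the product) and [ract] (with [mul] the reversed product). *)
Variables (act mul : A -> A -> A).
Hypothesis mul_or_rev : mul =2 *%R \/ mul =2 (fun x y => y * x).
Hypothesis actDr : forall x a b, act x (a + b) = act x a + act x b.
Hypothesis actDl : forall x y a, act (x + y) a = act x a + act y a.
Hypothesis act1 : forall a, act 1 a = a.
Hypothesis actA : forall x y a, act x (act y a) = act (mul x y) a.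
Variable K : pset.
Hypothesis K0 : K 0.
Hypothesis KD : forall a b, K a -> K b -> K (a + b).
Hypothesis Kact : forall x a, K a -> K (act x a).

Lemma act0 x : act x 0 = 0.
Proof. by apply: (addIr (act x 0)); rewrite -actDr !add0r. Qed.

Lemma actB x a b : act x (a - b) = act x a - act x b.
Proof. by apply: (addIr (act x b)); rewrite -actDr !subrK. Qed.

Lemma mul_ideal I x y : is_ideal G I -> I x -> G y -> I (mul x y).
Proof. by move=> HI Ix Gy; case: mul_or_rev => ->; [exact: (idealMr HI) | exact: (idealMl HI)]. Qed.

Lemma mul_subalg x y : G x -> G y -> G (mul x y).
Proof. by case: mul_or_rev => -> ? ?; apply: subalgM. Qed.

Lemma mul_unit_mod I y1 y2 : is_ideal G I -> G y1 -> G y2 -> I (1 - y1) -> I (1 - y2) ->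
  I (1 - mul y1 y2).
Proof.
move=> HI Gy1 Gy2 I1 I2; case: mul_or_rev => ->.
  by rewrite -(subrKA y1) -{2}(mulr1 y1) -mulrBr; apply: (idealD HI) (idealMl HI _ _).
by rewrite -(subrKA y2) -{2}(mulr1 y2) -mulrBr; apply: (idealD HI) (idealMl HI _ _).
Qed.

Local Notation V := (Vblk G act K).

Lemma Vblk_K C a : K a -> V C a.
Proof. by move=> Ka; exists G; split; [apply: inW_subalg | move=> x _; apply: Kact]. Qed.

Lemma Vblk_add C a b : is_class G R C -> V C a -> V C b -> V C (a + b).
Proof.
move=> HC [n1 [Hn1 K1]] [n2 [Hn2 K2]]; have [n [Hn s1 s2]] := inW_meet HG HC Hn1 Hn2.
by exists n; split=> // x nx; rewrite actDr; apply: KD; [apply/K1/s1 | apply/K2/s2].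
Qed.

Lemma Vblk_act C g a : is_class G R C -> G g -> V C a -> V C (act g a).
Proof.
move=> HC Gg [n [Hn Kn]]; exists n; split=> // x nx; rewrite actA.
exact/Kn/(mul_ideal (inW_ideal HG HC Hn)).
Qed.

Definition plusK (J : pset) z := exists u v, [/\ J u, K v & z = u + v].

(* If [n] also kills [z], then [z = (1 - y) z + y z] lies in [K]. *)
Definition cokilled n z := exists y, [/\ G y, n (1 - y) & forall g, G g -> K (act y (act g z))].

Lemma cokilledK n z : is_ideal G n -> K z -> cokilled n z.
Proof.
move=> Hn Kz; exists 1; rewrite subrr; split; [exact: (subalg1 HG) | exact: (ideal0 Hn) |].
by move=> g _; apply/Kact/Kact.
Qed.

Lemma cokilledD n a b : is_ideal G n -> cokilled n a -> cokilled n b -> cokilled n (a + b).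
Proof.
move=> Hn [y1 [Gy1 n1 K1]] [y2 [Gy2 n2 K2]].
exists (mul y1 y2); split; [exact: mul_subalg | exact: mul_unit_mod |].
move=> g Gg; rewrite !actDr; apply: KD.
  by rewrite -actA (actA y2); apply/K1/mul_subalg.
by rewrite -actA; apply/Kact/K2.
Qed.

Lemma cokilled_killed n b : (forall x, n x -> K (act x b)) -> cokilled n b -> K b.
Proof.
move=> Kb [y [Gy ny Ky]]; rewrite -[b]act1 -(subrK y 1) actDl.
by apply: KD; [apply: Kb | rewrite -{1}(act1 b); apply/Ky/(subalg1 HG)].
Qed.

(* Comaximality of [n] with an annihilator of [w] from another block. *)
Lemma cokilled_Vblk B C n w : is_class G R B -> is_class G R C -> B <> C ->
  inW G C n -> V B w -> cokilled n w.
Proof.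
move=> HB HC BC Hn [nw [Hnw Kw]].
have [x [y [nx ny E]]] := comax_inW HG HR HC HB (nesym BC) Hn Hnw.
exists y; split; [exact: ideal_sub (inW_ideal HG HB Hnw) _ ny | by rewrite -E addrK |].
by move=> g Gg; rewrite actA; apply/Kw/(mul_ideal (inW_ideal HG HB Hnw)).
Qed.

Section Projection.
Variables (C : pset -> Prop) (nC N : pset) (J : pset).
Hypothesis HC : is_class G R C.
Hypothesis decomp : forall a, exists (r : nat) (Bs : 'I_r -> pset -> Prop) (v : 'I_r -> A),
  (forall i, is_class G R (Bs i) /\ V (Bs i) (v i)) /\ K (a - \sum_(i < r) v i).
Hypothesis nC_kills : forall a, V C a -> forall x, nC x -> K (act x a).
Hypothesis HN : inW G C N.
Hypothesis N_sub : psubset N nC.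
Hypothesis J0 : J 0.
Hypothesis JD : forall a b, J a -> J b -> J (a + b).
Hypothesis J_act : forall x a, N x -> J (act x a).
Hypothesis J_ind : forall S : pset, S 0 -> (forall a b, S a -> S b -> S (a + b)) ->
  (forall x a, N x -> S (act x a)) -> psubset J S.

Lemma plusK0 : plusK J 0. Proof. by exists 0, 0; rewrite addr0. Qed.

Lemma plusKD a b : plusK J a -> plusK J b -> plusK J (a + b).
Proof.
move=> [u1 [v1 [? ? ->]]] [u2 [v2 [? ? ->]]]; exists (u1 + u2), (v1 + v2).
by split; [apply: JD | apply: KD | rewrite addrACA].
Qed.

(* Components of [a] in the other blocks [B] lie in [J]: [N] and [W(B)] are comaximal. *)
Lemma Vblk_proj_surj a : exists b, V C b /\ plusK J (a - b).
Proof.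
pose Reach z := exists b, V C b /\ plusK J (z - b).
have [r [Bs [v [Hv Ka]]]] := decomp a.
have [b [Vb Jb]] : Reach (\sum_(i < r) v i).
  apply: (big_ind Reach); first by exists 0; rewrite subrr; split; [apply: Vblk_K | apply: plusK0].
    move=> z1 z2 [b1 [V1 J1]] [b2 [V2 J2]]; exists (b1 + b2); split; first exact: Vblk_add.
    by rewrite opprD addrACA; apply: plusKD.
  move=> i _; case: (Hv i) => HBi Vi.
  case: (classic (Bs i = C)) => BiC.
    by exists (v i); rewrite subrr -BiC; split=> //; apply: plusK0.
  exists 0; rewrite subr0; split; first exact: Vblk_K.
  case: Vi => [nv [Hnv Kv]].
  have [x [y [Nx ny Exy]]] := comax_inW HG HR HC HBi (nesym BiC) HN Hnv.
  exists (act x (v i)), (act y (v i)); split; [exact: J_act | exact: Kv |].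
  by rewrite -actDl Exy act1.
exists b; split=> //; rewrite -(subrKA (\sum_(i < r) v i)).
by apply: plusKD => //; exists 0, (a - \sum_(i < r) v i); rewrite add0r.
Qed.

Lemma Vblk_proj_inj b : V C b -> plusK J b -> K b.
Proof.
move=> [nb [Hnb Kb]] [u [w [Ju Kw Eb]]].
have Inb := inW_ideal HG HC Hnb.
apply: (cokilled_killed Kb); rewrite {}Eb; apply: (cokilledD Inb _ (cokilledK Inb Kw)).
move: u Ju; apply: J_ind; [exact: cokilledK | by move=> *; apply: cokilledD |].
move=> x a Nx; have [r [Bs [v [Hv Ka]]]] := decomp a.
have Gx : G x by apply: ideal_sub (inW_ideal HG HC HN) _ Nx.
rewrite -(subrK (act x (\sum_(i < r) v i)) (act x a)) -actB.
apply: (cokilledD Inb (cokilledK Inb (Kact x Ka))).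
apply: (big_ind (fun s => cokilled nb (act x s))).
- by rewrite act0; apply: cokilledK.
- by move=> s1 s2 ? ?; rewrite actDr; apply: cokilledD.
- move=> i _; case: (Hv i) => HBi Vi.
  case: (classic (Bs i = C)) => [BiC | BiC].
    by apply/cokilledK/nC_kills/N_sub; rewrite // -BiC.
  exact/(cokilled_Vblk HBi HC BiC Hnb)/Vblk_act.
Qed.

End Projection.
End BlockModule.

Section Composition.
Variables (k : fieldType) (A : algType k).
Local Notation pset := (A -> Prop).
Implicit Types (B C D E : pset -> Prop) (m n l N : pset) (f g h : hcfam A) (a b c x z : A).
Variable G : pset.
Hypothesis HG : is_subalg G.
Variable R : pset -> pset -> Prop.
Hypothesis HR : equiv_on_cfs G R.
Hypothesis HS : strong_HC G R.

Local Notation lac := (@lact _ A).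
Local Notation rac := (@ract _ A).
Local Notation VL m C := (Vblk G lac (lgen m) C).
Local Notation VR l C := (Vblk G rac (rgen l) C).

Let lact_mul : ( *%R : A -> A -> A) =2 *%R \/ ( *%R : A -> A -> A) =2 (fun x y => y * x).
Proof. by left. Qed.
Let ract_mul : (fun x y : A => y * x) =2 *%R \/ (fun x y : A => y * x) =2 (fun x y => y * x).
Proof. by right. Qed.
Let lactA x y a : lac x (lac y a) = lac (x * y) a. Proof. exact: mulrA. Qed.
Let ractA x y a : rac x (rac y a) = rac (y * x) a. Proof. exact/esym/mulrA. Qed.

Lemma VL_mull m C c a : is_class G R C -> G c -> VL m C a -> VL m C (c * a).
Proof. exact: (Vblk_act HG lact_mul lactA). Qed.

Lemma VR_mulr l C c b : is_class G R C -> G c -> VR l C b -> VR l C (b * c).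
Proof. exact: (Vblk_act HG ract_mul ractA). Qed.

Lemma VblkS act C (K K' : pset) : psubset K K' ->
  psubset (Vblk G act K C) (Vblk G act K' C).
Proof. by move=> sK a [n [Hn Kn]]; exists n; split=> // x /Kn /sK. Qed.

Lemma proj_bij_left_eventually B C m : is_class G R B -> is_class G R C -> inW G B m ->
  eventuallyW G C (proj_bij_left G C m).
Proof.
move=> HB HC Hm; have [[decomp _ kill] _] := HS HB Hm.
have [nC [HnC nC_kills]] := kill C HC.
exists nC; split=> // N HN sN.
have J_ind S : S 0 -> (forall a b, S a -> S b -> S (a + b)) ->
    (forall x a, N x -> S (lac x a)) -> psubset (rgen N) S.
  by move=> S0 SD Sx; apply: sum_prods_ind => // x y Nx _; apply: Sx.
split=> [a | b Vb [u [v [Hu [Hv E]]]]].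
  have [b [Vb [u [v [Hu Hv E]]]]] := Vblk_proj_surj HG HR (@mulrDr _) (@mulrDl _) (@mul1r _)
    (lgen0 m) (@lgenD _ _ m) (@lgenMl _ _ m) HC decomp HN (rgen0 N) (@rgenD _ _ N)
    (fun x a Nx => rgen_mul a Nx) a.
  by exists b; split=> //; exists u, v.
apply: (Vblk_proj_inj HG HR lact_mul (@mulrDr _) (@mulrDl _) (@mul1r _) lactA
  (lgen0 m) (@lgenD _ _ m) (@lgenMl _ _ m) HC decomp nC_kills HN sN J_ind Vb).
by exists u, v.
Qed.

Lemma proj_bij_right_eventually D C l : is_class G R D -> is_class G R C -> inW G D l ->
  eventuallyW G C (proj_bij_right G C l).
Proof.
move=> HD HC Hl; have [_ [decomp _ kill]] := HS HD Hl.
have [nC [HnC nC_kills]] := kill C HC.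
exists nC; split=> // N HN sN.
have J_ind S : S 0 -> (forall a b, S a -> S b -> S (a + b)) ->
    (forall x a, N x -> S (rac x a)) -> psubset (lgen N) S.
  by move=> S0 SD Sx; apply: sum_prods_ind => // x y _ Ny; apply: Sx.
split=> [a | b Vb [u [v [Hu [Hv E]]]]].
  have [b [Vb [u [v [Hu Hv E]]]]] := Vblk_proj_surj HG HR (fun x a b => mulrDl a b x)
    (fun x y a => mulrDr a x y) (@mulr1 _) (rgen0 l) (@rgenD _ _ l) (@rgenMr _ _ l)
    HC decomp HN (lgen0 N) (@lgenD _ _ N) (fun x a Nx => lgen_mul a Nx) a.
  by exists b; split=> //; exists v, u; rewrite E addrC.
apply: (Vblk_proj_inj HG HR ract_mul (fun x a b => mulrDl a b x) (fun x y a => mulrDr a x y)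
  (@mulr1 _) ractA (rgen0 l) (@rgenD _ _ l) (@rgenMr _ _ l) HC decomp nC_kills HN sN J_ind Vb).
by exists v, u; rewrite E addrC.
Qed.

Definition proj_bij C m l N := proj_bij_left G C m N /\ proj_bij_right G C l N.

Lemma proj_bij_eventually B C D m l : is_class G R B -> is_class G R C -> is_class G R D ->
  inW G B m -> inW G D l -> eventuallyW G C (proj_bij C m l).
Proof.
move=> HB HC HD Hm Hl; apply: (eventuallyW_and HG HC).
  exact: proj_bij_left_eventually HB HC Hm.
exact: proj_bij_right_eventually HD HC Hl.
Qed.

(* [a] lifts the image of [x] in [A/(NA + Am)] to [(A/Am)(C)]; dually for [rrep]. *)
Definition lrep C m N x a := Qmod m N (x - a) /\ VL m C a.
Definition rrep C l N x b := Qmod N l (x - b) /\ VR l C b.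

Lemma lrep_exists C m N x : proj_bij_left G C m N -> exists a, lrep C m N x a.
Proof. by move=> [/(_ x) [a [Va Qa]] _]; exists a. Qed.

Lemma rrep_exists C l N x : proj_bij_right G C l N -> exists b, rrep C l N x b.
Proof. by move=> [/(_ x) [b [Vb Qb]] _]; exists b. Qed.

Lemma VL_kill C m N a y : is_class G R C -> inW G C N -> proj_bij_left G C m N ->
  VL m C a -> N y -> lgen m (y * a).
Proof.
move=> HC HN [_ inj] Va Ny; apply: inj; last exact/Qmod_rgen/rgen_mul.
exact/VL_mull/Va/(ideal_sub (inW_ideal HG HC HN)).
Qed.

Lemma VR_kill C l N b y : is_class G R C -> inW G C N -> proj_bij_right G C l N ->
  VR l C b -> N y -> rgen l (b * y).
Proof.
move=> HC HN [_ inj] Vb Ny; apply: inj; last exact/Qmod_lgen/lgen_mul.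
exact/VR_mulr/Vb/(ideal_sub (inW_ideal HG HC HN)).
Qed.

Lemma Qmod_mul_VL C m N l a z : is_class G R C -> inW G C N -> proj_bij_left G C m N ->
  VL m C a -> Qmod N l z -> Qmod m l (z * a).
Proof. by move=> HC HN PL Va; apply: Qmod_mulr => y; apply: (VL_kill HC HN PL Va). Qed.

Lemma Qmod_mul_VR C l N m b z : is_class G R C -> inW G C N -> proj_bij_right G C l N ->
  VR l C b -> Qmod m N z -> Qmod m l (b * z).
Proof. by move=> HC HN PR Vb; apply: Qmod_mull => y; apply: (VR_kill HC HN PR Vb). Qed.

Lemma lrep_lim B C f m m' N N' a : in_lim G B C f ->
  inW G B m -> inW G B m' -> inW G C N -> inW G C N' -> psubset m' m -> psubset N' N ->
  lrep C m' N' (f m' N') a -> lrep C m N (f m N) a.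
Proof.
move=> Hf Hm Hm' HN HN' sm sN [Qa Va]; split; last exact: VblkS (lgenS sm) _ Va.
by apply: (Qmod_trans (y := f m' N')); [apply/Qmod_sym/Hf | apply: QmodS sm sN Qa].
Qed.

Lemma rrep_lim C D g l l' N N' b : in_lim G C D g ->
  inW G C N -> inW G C N' -> inW G D l -> inW G D l' -> psubset N' N -> psubset l' l ->
  rrep C l' N' (g N' l') b -> rrep C l N (g N l) b.
Proof.
move=> Hg HN HN' Hl Hl' sN sl [Qb Vb]; split; last exact: VblkS (rgenS sl) _ Vb.
by apply: (Qmod_trans (y := g N' l')); [apply/Qmod_sym/Hg | apply: QmodS sN sl Qb].
Qed.

(* The choice of an admissible triple; its value is irrelevant when none exists. *)
Definition compf C g f : hcfam A := fun m l =>
  let t := epsilon (inhabits (G, 0, 0))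
    (fun t : pset * A * A => admissible G C f g m l t.1.1 t.1.2 t.2) in t.2 * t.1.2.

(* Compare both products with the components of [f] and [g] at a common [N <= n, n']. *)
Lemma admissible_unique B C D f g m l n a b n' a' b' : is_class G R C ->
  in_lim G B C f -> in_lim G C D g -> inW G B m -> inW G D l ->
  admissible G C f g m l n a b -> admissible G C f g m l n' a' b' ->
  Qmod m l (b * a - b' * a').
Proof.
move=> HC Hf Hg Hm Hl [Hn PR PL [Qa Va] [Qb Vb]] [Hn' PR' PL' [Qa' Va'] [Qb' Vb']].
have [N [HN sN sN']] := inW_meet HG HC Hn Hn'.
have -> : b * a - b' * a' =
    b * (a - f m N) + b * (f m N - a') + ((b - g N l) * a' + (g N l - b') * a').
  by rewrite -mulrDr -mulrDl !subrKA mulrBr mulrBl subrKA.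
apply: QmodD; first apply: QmodD.
- apply: (Qmod_mul_VR HC Hn PR Vb); apply: (Qmod_trans (y := f m n)); first exact: (Qmod_sym Qa).
  apply: Qmod_sym; exact: (Hf m m n N Hm Hm Hn HN (psubsetxx _) sN).
- apply: (Qmod_mul_VR HC Hn' PR' Vb); apply: (Qmod_trans (y := f m n')) => //.
  exact: (Hf m m n' N Hm Hm Hn' HN (psubsetxx _) sN').
- apply: QmodD.
    apply: (Qmod_mul_VL HC Hn PL Va'); apply: (Qmod_trans (y := g n l)); first exact: (Qmod_sym Qb).
    apply: Qmod_sym; exact: (Hg n N l l Hn HN Hl Hl sN (psubsetxx _)).
  apply: (Qmod_mul_VL HC Hn' PL' Va'); apply: (Qmod_trans (y := g n' l)) => //.
  exact: (Hg n' N l l Hn' HN Hl Hl sN' (psubsetxx _)).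
Qed.

Lemma compf_eq B C D f g m l n a b : is_class G R C ->
  in_lim G B C f -> in_lim G C D g -> inW G B m -> inW G D l ->
  admissible G C f g m l n a b -> Qmod m l (compf C g f m l - b * a).
Proof.
move=> HC Hf Hg Hm Hl Ha; rewrite /compf.
set P := fun t : pset * A * A => _.
have : P (epsilon (inhabits (G, 0, 0)) P) by apply: epsilon_spec; exists (n, a, b).
by move: (epsilon _ P) => [[n' a'] b'] Ha'; apply: (admissible_unique HC Hf Hg Hm Hl Ha' Ha).
Qed.

Lemma compf_spec B C D f g : is_class G R B -> is_class G R C -> is_class G R D ->
  in_lim G B C f -> in_lim G C D g -> comp_spec G B C D f g (compf C g f).
Proof.
move=> HB HC HD Hf Hg m l Hm Hl; split; last by move=> n a b; exact: (compf_eq HC Hf Hg Hm Hl).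
have [N [HN [PL PR]]] := eventuallyW_ex (proj_bij_eventually HB HC HD Hm Hl).
have [a Ha] := lrep_exists (f m N) PL; have [b Hb] := rrep_exists (g N l) PR.
by exists N, a, b; split.
Qed.

(* Only one factor needs to be lifted to a block component; the other may stay raw. *)
Lemma compf_lrep B C D f g m l N a : is_class G R C ->
  in_lim G B C f -> in_lim G C D g -> inW G B m -> inW G D l -> inW G C N ->
  proj_bij C m l N -> lrep C m N (f m N) a -> Qmod m l (compf C g f m l - g N l * a).
Proof.
move=> HC Hf Hg Hm Hl HN [PL PR] Ha; have [b Hb] := rrep_exists (g N l) PR.
apply: (Qmod_trans (y := b * a)); first exact: (compf_eq HC Hf Hg Hm Hl (And5 HN PR PL Ha Hb)).
by rewrite -mulrBl; apply: (Qmod_mul_VL HC HN PL Ha.2); apply: Qmod_sym; case: Hb.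
Qed.

Lemma compf_rrep B C D f g m l N b : is_class G R C ->
  in_lim G B C f -> in_lim G C D g -> inW G B m -> inW G D l -> inW G C N ->
  proj_bij C m l N -> rrep C l N (g N l) b -> Qmod m l (compf C g f m l - b * f m N).
Proof.
move=> HC Hf Hg Hm Hl HN [PL PR] Hb; have [a Ha] := lrep_exists (f m N) PL.
apply: (Qmod_trans (y := b * a)); first exact: (compf_eq HC Hf Hg Hm Hl (And5 HN PR PL Ha Hb)).
by rewrite -mulrBr; apply: (Qmod_mul_VR HC HN PR Hb.2); apply: Qmod_sym; case: Ha.
Qed.

Lemma compf_in_lim B C D f g : is_class G R B -> is_class G R C -> is_class G R D ->
  in_lim G B C f -> in_lim G C D g -> in_lim G B D (compf C g f).
Proof.
move=> HB HC HD Hf Hg m m' l l' Hm Hm' Hl Hl' sm sl.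
have [N [HN [PN PN']]] := eventuallyW_ex (eventuallyW_and HG HC
  (proj_bij_eventually HB HC HD Hm Hl) (proj_bij_eventually HB HC HD Hm' Hl')).
have [a Ha'] := lrep_exists (f m' N) PN'.1.
have Ha := lrep_lim Hf Hm Hm' HN HN sm (psubsetxx N) Ha'.
apply: (Qmod_trans (y := g N l' * a)).
  exact: QmodS sm sl (compf_lrep HC Hf Hg Hm' Hl' HN PN' Ha').
apply: (Qmod_trans (y := g N l * a)); last exact/Qmod_sym/(compf_lrep HC Hf Hg Hm Hl HN PN Ha).
rewrite -mulrBl; apply: (Qmod_mul_VL HC HN PN.1 Ha.2).
exact: (Hg N N l l' HN HN Hl Hl' (psubsetxx N) sl).
Qed.

Lemma fam_add_lim B C f f' : in_lim G B C f -> in_lim G B C f' -> in_lim G B C (fam_add f f').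
Proof.
move=> Hf Hf' m m' n n' Hm Hm' Hn Hn' sm sn; rewrite /fam_add opprD addrACA.
by apply: QmodD; [apply: Hf | apply: Hf'].
Qed.

Lemma fam_lmul_lim B C c f : is_class G R C -> G c -> in_lim G B C f -> in_lim G B C (fam_lmul c f).
Proof.
move=> HC Gc Hf m m' n n' Hm Hm' Hn Hn' sm sn; rewrite /fam_lmul -mulrBr.
by apply: (Qmod_mulGl (inW_ideal HG HC Hn) Gc); apply: Hf.
Qed.

Lemma fam_rmul_lim B C c f : is_class G R B -> G c -> in_lim G B C f -> in_lim G B C (fam_rmul f c).
Proof.
move=> HB Gc Hf m m' n n' Hm Hm' Hn Hn' sm sn; rewrite /fam_rmul -mulrBl.
by apply: (Qmod_mulGr (inW_ideal HG HB Hm) Gc); apply: Hf.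
Qed.

Lemma fam_cst_lim B C c : in_lim G B C (fam_cst c).
Proof. by move=> *; rewrite /fam_cst subrr; apply: Qmod0. Qed.

Section BinaryLaws.
Variables B C D : pset -> Prop.
Hypotheses (HB : is_class G R B) (HC : is_class G R C) (HD : is_class G R D).

Lemma exists_lrep f m l : inW G B m -> inW G D l ->
  exists N a, [/\ inW G C N, proj_bij C m l N & lrep C m N (f m N) a].
Proof.
move=> Hm Hl; have [N [HN PN]] := eventuallyW_ex (proj_bij_eventually HB HC HD Hm Hl).
by have [a Ha] := lrep_exists (f m N) PN.1; exists N, a.
Qed.

Lemma exists_rrep g m l : inW G B m -> inW G D l ->
  exists N b, [/\ inW G C N, proj_bij C m l N & rrep C l N (g N l) b].
Proof.
move=> Hm Hl; have [N [HN PN]] := eventuallyW_ex (proj_bij_eventually HB HC HD Hm Hl).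
by have [b Hb] := rrep_exists (g N l) PN.2; exists N, b.
Qed.

Lemma compf_lim_eq f f' g g' : in_lim G B C f -> in_lim G B C f' ->
  in_lim G C D g -> in_lim G C D g' -> lim_eq G B C f f' -> lim_eq G C D g g' ->
  lim_eq G B D (compf C g f) (compf C g' f').
Proof.
move=> Hf Hf' Hg Hg' Ef Eg m l Hm Hl; have [N [a [HN PN [Qa Va]]]] := exists_lrep f Hm Hl.
have Ha' : lrep C m N (f' m N) a.
  by split=> //; apply: (Qmod_trans (y := f m N)) => //; apply/Qmod_sym/Ef.
apply: (Qmod_trans (y := g N l * a)); first exact: (compf_lrep HC Hf Hg Hm Hl HN PN (conj Qa Va)).
apply: (Qmod_trans (y := g' N l * a)); last exact/Qmod_sym/(compf_lrep HC Hf' Hg' Hm Hl HN PN Ha').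
by rewrite -mulrBl; apply: (Qmod_mul_VL HC HN PN.1 Va); apply: Eg.
Qed.

Lemma compf_addl f g g' : in_lim G B C f -> in_lim G C D g -> in_lim G C D g' ->
  lim_eq G B D (compf C (fam_add g g') f) (fam_add (compf C g f) (compf C g' f)).
Proof.
move=> Hf Hg Hg' m l Hm Hl; have [N [a [HN PN Ha]]] := exists_lrep f Hm Hl.
apply: (Qmod_trans (y := (g N l + g' N l) * a)).
  exact: (compf_lrep HC Hf (fam_add_lim Hg Hg') Hm Hl HN PN Ha).
rewrite mulrDl /fam_add opprD addrACA.
by apply: QmodD; apply: Qmod_sym; [apply: (compf_lrep HC Hf Hg) | apply: (compf_lrep HC Hf Hg')].
Qed.

Lemma compf_addr f f' g : in_lim G B C f -> in_lim G B C f' -> in_lim G C D g ->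
  lim_eq G B D (compf C g (fam_add f f')) (fam_add (compf C g f) (compf C g f')).
Proof.
move=> Hf Hf' Hg m l Hm Hl; have [N [b [HN PN Hb]]] := exists_rrep g Hm Hl.
apply: (Qmod_trans (y := b * (f m N + f' m N))).
  exact: (compf_rrep HC (fam_add_lim Hf Hf') Hg Hm Hl HN PN Hb).
rewrite mulrDr /fam_add opprD addrACA.
by apply: QmodD; apply: Qmod_sym; [apply: (compf_rrep HC Hf Hg) | apply: (compf_rrep HC Hf' Hg)].
Qed.

Lemma compf_lmul c f g : G c -> in_lim G B C f -> in_lim G C D g ->
  lim_eq G B D (compf C (fam_lmul c g) f) (fam_lmul c (compf C g f)).
Proof.
move=> Gc Hf Hg m l Hm Hl; have [N [a [HN PN Ha]]] := exists_lrep f Hm Hl.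
apply: (Qmod_trans (y := c * (g N l * a))).
  by rewrite mulrA; exact: (compf_lrep HC Hf (fam_lmul_lim HD Gc Hg) Hm Hl HN PN Ha).
rewrite /fam_lmul -mulrBr; apply: (Qmod_mulGl (inW_ideal HG HD Hl) Gc).
exact/Qmod_sym/(compf_lrep HC Hf Hg Hm Hl HN PN Ha).
Qed.

Lemma compf_rmul c f g : G c -> in_lim G B C f -> in_lim G C D g ->
  lim_eq G B D (compf C g (fam_rmul f c)) (fam_rmul (compf C g f) c).
Proof.
move=> Gc Hf Hg m l Hm Hl; have [N [b [HN PN Hb]]] := exists_rrep g Hm Hl.
apply: (Qmod_trans (y := b * f m N * c)).
  by rewrite -mulrA; exact: (compf_rrep HC (fam_rmul_lim HB Gc Hf) Hg Hm Hl HN PN Hb).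
rewrite /fam_rmul -mulrBl; apply: (Qmod_mulGr (inW_ideal HG HB Hm) Gc).
exact/Qmod_sym/(compf_rrep HC Hf Hg Hm Hl HN PN Hb).
Qed.

Lemma compf_balanced c f g : G c -> in_lim G B C f -> in_lim G C D g ->
  lim_eq G B D (compf C (fam_rmul g c) f) (compf C g (fam_lmul c f)).
Proof.
move=> Gc Hf Hg m l Hm Hl; have [N [a [HN PN [Qa Va]]]] := exists_lrep f Hm Hl.
have Hca : lrep C m N (c * f m N) (c * a).
  split; last exact: VL_mull HC Gc Va.
  by rewrite -mulrBr; apply: (Qmod_mulGl (inW_ideal HG HC HN) Gc).
apply: (Qmod_trans (y := g N l * c * a)).
  exact: (compf_lrep HC Hf (fam_rmul_lim HC Gc Hg) Hm Hl HN PN (conj Qa Va)).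
rewrite -mulrA; exact/Qmod_sym/(compf_lrep HC (fam_lmul_lim HC Gc Hf) Hg Hm Hl HN PN Hca).
Qed.

End BinaryLaws.

(* Evaluate [g] at [(NC, ND')] on both sides, where [ND' <= ND] is chosen after [NC]. *)
Lemma compf_assoc B C D E f g h :
  is_class G R B -> is_class G R C -> is_class G R D -> is_class G R E ->
  in_lim G B C f -> in_lim G C D g -> in_lim G D E h ->
  lim_eq G B E (compf C (compf D h g) f) (compf D h (compf C g f)).
Proof.
move=> HB HC HD HE Hf Hg Hh m e Hm He.
have [ND [HND PD]] := eventuallyW_ex (proj_bij_eventually HB HD HE Hm He).
have [NC [HNC [PC PC']]] := eventuallyW_ex (eventuallyW_and HG HC
  (proj_bij_eventually HB HC HE Hm He) (proj_bij_eventually HB HC HD Hm HND)).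
have [ND' [HND' [PD' sD]]] := eventuallyW_ex (eventuallyW_and HG HD
  (proj_bij_eventually HC HD HE HNC He) (eventuallyW_sub HND)).
have [a Ha] := lrep_exists (f m NC) PC.1.
have [b Hb'] := rrep_exists (h ND' e) PD'.2.
have Hb := rrep_lim Hh HND HND' He He sD (psubsetxx e) Hb'.
have Hgf := compf_in_lim HB HC HD Hf Hg; have Hhg := compf_in_lim HC HD HE Hg Hh.
apply: (Qmod_trans (y := b * g NC ND' * a)).
  apply: (Qmod_trans (y := compf D h g NC e * a)).
    exact: (compf_lrep HC Hf Hhg Hm He HNC PC Ha).
  rewrite -mulrBl; apply: (Qmod_mul_VL HC HNC PC.1 Ha.2).
  exact: (compf_rrep HD Hg Hh HNC He HND' PD' Hb').
apply: (Qmod_trans (y := b * (g NC ND * a))).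
  rewrite -mulrA -mulrBr -mulrBl; apply: (Qmod_mul_VR HD HND PD.2 Hb.2).
  apply: (Qmod_mul_VL HC HNC PC.1 Ha.2).
  exact: (Hg NC NC ND ND' HNC HNC HND HND' (psubsetxx NC) sD).
apply: Qmod_sym; apply: (Qmod_trans (y := b * compf C g f m ND)).
  exact: (compf_rrep HD Hgf Hh Hm He HND PD Hb).
rewrite -mulrBr; apply: (Qmod_mul_VR HD HND PD.2 Hb.2).
exact: (compf_lrep HC Hf Hg Hm HND HNC PC' Ha).
Qed.

Lemma compf_cst_l B C c f : is_class G R B -> is_class G R C -> G c -> in_lim G B C f ->
  lim_eq G B C (fam_lmul c f) (compf C (fam_cst c) f).
Proof.
move=> HB HC Gc Hf m n Hm Hn.
have [N [HN [PN sN]]] := eventuallyW_ex (eventuallyW_and HG HC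
  (proj_bij_eventually HB HC HC Hm Hn) (eventuallyW_sub Hn)).
have [a [Qa Va]] := lrep_exists (f m N) PN.1.
apply: (Qmod_trans (y := c * a)).
  rewrite /fam_lmul -mulrBr; apply: (Qmod_mulGl (inW_ideal HG HC Hn) Gc).
  apply: (Qmod_trans (y := f m N)); first exact/Qmod_sym/(Hf m m n N Hm Hm Hn HN (psubsetxx m) sN).
  exact: QmodS (psubsetxx m) sN Qa.
exact/Qmod_sym/(compf_lrep HC Hf (fam_cst_lim c) Hm Hn HN PN (conj Qa Va)).
Qed.

Lemma compf_cst_r B C c f : is_class G R B -> is_class G R C -> G c -> in_lim G B C f ->
  lim_eq G B C (fam_rmul f c) (compf B f (fam_cst c)).
Proof.
move=> HB HC Gc Hf m n Hm Hn.
have [N [HN [PN sN]]] := eventuallyW_ex (eventuallyW_and HG HB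
  (proj_bij_eventually HB HB HC Hm Hn) (eventuallyW_sub Hm)).
have [b [Qb Vb]] := rrep_exists (f N n) PN.2.
apply: (Qmod_trans (y := b * c)).
  rewrite /fam_rmul -mulrBl; apply: (Qmod_mulGr (inW_ideal HG HB Hm) Gc).
  apply: (Qmod_trans (y := f N n)); first exact/Qmod_sym/(Hf m N n n Hm HN Hn Hn sN (psubsetxx n)).
  exact: QmodS sN (psubsetxx n) Qb.
exact/Qmod_sym/(compf_rrep HB (fam_cst_lim c) Hf Hm Hn HN PN (conj Qb Vb)).
Qed.

Lemma compf_id_l B C f : is_class G R B -> is_class G R C -> in_lim G B C f ->
  lim_eq G B C (compf C (fam_cst 1) f) f.
Proof.
move=> HB HC Hf m n Hm Hn; apply: Qmod_sym.
by have := compf_cst_l HB HC (subalg1 HG) Hf Hm Hn; rewrite /fam_lmul mul1r.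
Qed.

Lemma compf_id_r B C f : is_class G R B -> is_class G R C -> in_lim G B C f ->
  lim_eq G B C (compf B f (fam_cst 1)) f.
Proof.
move=> HB HC Hf m n Hm Hn; apply: Qmod_sym.
by have := compf_cst_r HB HC (subalg1 HG) Hf Hm Hn; rewrite /fam_rmul mulr1.
Qed.

End Composition.

Theorem mainTheorem14 (k : fieldType) (A : algType k) (G : A -> Prop)
    (R : (A -> Prop) -> (A -> Prop) -> Prop) :
  is_subalg G -> equiv_on_cfs G R -> strong_HC G R ->
  exists comp : ((A -> Prop) -> Prop) -> ((A -> Prop) -> Prop) -> ((A -> Prop) -> Prop) ->
                hcfam A -> hcfam A -> hcfam A,
  forall B C D E : (A -> Prop) -> Prop,
    is_class G R B -> is_class G R C -> is_class G R D -> is_class G R E ->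
  (* well-defined: comp B C D beta alpha is the composite beta o alpha in A(B,D),
     given by the composition rule independently of all choices *)
  (forall f g, in_lim G B C f -> in_lim G C D g ->
     in_lim G B D (comp B C D g f) /\ comp_spec G B C D f g (comp B C D g f)) /\
  (* it is a map on A(C,D) x A(B,C) *)
  (forall f f' g g', in_lim G B C f -> in_lim G B C f' -> in_lim G C D g -> in_lim G C D g' ->
     lim_eq G B C f f' -> lim_eq G C D g g' ->
     lim_eq G B D (comp B C D g f) (comp B C D g' f')) /\
  (* inducing a (Gamma,Gamma)-bimodule map A(C,D) (x)_Gamma A(B,C) -> A(B,D):
     biadditive, Gamma-balanced, left/right Gamma-linear *)
  (forall f f' g g', in_lim G B C f -> in_lim G B C f' -> in_lim G C D g -> in_lim G C D g' ->
     lim_eq G B D (comp B C D (fam_add g g') f) (fam_add (comp B C D g f) (comp B C D g' f)) /\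
     lim_eq G B D (comp B C D g (fam_add f f')) (fam_add (comp B C D g f) (comp B C D g f'))) /\
  (forall (c : A) f g, G c -> in_lim G B C f -> in_lim G C D g ->
     lim_eq G B D (comp B C D (fam_lmul c g) f) (fam_lmul c (comp B C D g f)) /\
     lim_eq G B D (comp B C D (fam_rmul g c) f) (comp B C D g (fam_lmul c f)) /\
     lim_eq G B D (comp B C D g (fam_rmul f c)) (fam_rmul (comp B C D g f) c)) /\
  (* associativity *)
  (forall f g h, in_lim G B C f -> in_lim G C D g -> in_lim G D E h ->
     lim_eq G B E (comp B C E (comp C D E h g) f) (comp B D E h (comp B C D g f))) /\
  (* gamma.alpha = (gamma) o alpha and alpha.gamma = alpha o (gamma) *)
  (forall (c : A) f, G c -> in_lim G B C f ->
     lim_eq G B C (fam_lmul c f) (comp B C C (fam_cst c) f) /\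
     lim_eq G B C (fam_rmul f c) (comp B B C f (fam_cst c))) /\
  (* identities (1) in A(B,B) *)
  in_lim G B B (fam_cst 1) /\
  (forall f, in_lim G B C f ->
     lim_eq G B C (comp B C C (fam_cst 1) f) f /\
     lim_eq G B C (comp B B C f (fam_cst 1)) f).
Proof.
move=> HG HR HS; exists (fun B C D g f => compf G C g f) => B C D E HB HC HD HE.
split.
  move=> f g Hf Hg.
  by split; [apply: (compf_in_lim HG HR HS) | apply: (compf_spec HG HR HS)].
split; first exact: (compf_lim_eq HG HR HS HB HC HD).
split.
  move=> f f' g g' Hf Hf' Hg Hg'.
  by split; [apply: (compf_addl HG HR HS) | apply: (compf_addr HG HR HS)].
split.
  move=> c f g Gc Hf Hg; split; first exact: (compf_lmul HG HR HS).
  by split; [apply: (compf_balanced HG HR HS) | apply: (compf_rmul HG HR HS)].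
split; first by move=> f g h; apply: (compf_assoc HG HR HS HB HC HD HE).
split.
  move=> c f Gc Hf.
  by split; [apply: (compf_cst_l HG HR HS) | apply: (compf_cst_r HG HR HS)].
split; first exact: fam_cst_lim.
by move=> f Hf; split; [apply: (compf_id_l HG HR HS) | apply: (compf_id_r HG HR HS)].
Qed.
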